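(* Let $n \geq d \geq 1$, let $\bar{w}\in\mathbb{R}^d$, let $\bar{\pi}$ be a permutation of $[n]$, let $x_0,x_1,\dots,x_n$ be i.i.d.\ draws from $N(0,I_d)$, and set $y_0 := \bar{w}^\top x_0$, $y_i := \bar{w}^\top x_{\bar{\pi}(i)}$ for $i\in[n]$. Let $X = [x_1|\cdots|x_n]^\top\in\mathbb{R}^{n\times d}$, let $X^\dagger = [\tilde{x}_1|\cdots|\tilde{x}_n]$ be its Moore–Penrose pseudoinverse, and let $c_{i,j} := y_i\,\tilde{x}_j^\top x_0$ for $(i,j)\in[n]\times[n]$. Then $X$ has rank $d$ almost surely, and the set $\mathcal{S}_{\bar{\pi}} := \{(i,j)\in[n]\times[n] : \bar{\pi}(i) = j\}$ satisfies $y_0 = \sum_{(i,j)\in\mathcal{S}_{\bar{\pi}}} c_{i,j}$ (almost surely). *)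

From HB Require Import structures.
From mathcomp Require Import all_boot all_order all_algebra perm.
From mathcomp Require Import all_classical all_reals all_analysis.
Set Implicit Arguments. Unset Strict Implicit. Unset Printing Implicit Defensive.
Import Order.TTheory GRing.Theory Num.Theory.
Local Open Scope classical_set_scope.
Local Open Scope ring_scope.

(* Mutual independence of a finite family of real random variables:
   the joint law factorizes on all products of measurable sets
   (taking B i = setT recovers every finite subfamily). *)
Definition mutually_independent d (T : measurableType d) (R : realType)
    (P : probability T R) (I : finType) (X : I -> {RV P >-> R}) : Prop :=
  forall B : I -> set R, (forall i, measurable (B i)) ->
    P (\bigcap_(i in [set: I]) (X i @^-1` B i)) =
    (\prod_(i : I) P (X i @^-1` B i))%E.

Definition std_normal d (T : measurableType d) (R : realType)
    (P : probability T R) (X : {RV P >-> R}) : Prop :=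
  forall A : set R, measurable A -> distribution P X A = normal_prob 0 1 A.

(* The four Penrose conditions characterizing the Moore–Penrose pseudoinverse
   Y of X (real matrices, so conjugate transpose = transpose). *)
Definition penrose (R : realType) (m n : nat)
    (X : 'M[R]_(m, n)) (Y : 'M[R]_(n, m)) : Prop :=
  [/\ X *m Y *m X = X, Y *m X *m Y = Y,
      (X *m Y)^T = X *m Y & (Y *m X)^T = Y *m X].

(* The Moore–Penrose pseudoinverse (exists and is unique over the reals). *)
Definition mp_pinv (R : realType) (m n : nat) (X : 'M[R]_(m, n)) : 'M[R]_(n, m) :=
  xget 0 [set Y | penrose X Y].

From HB Require Import structures.
From mathcomp Require Import all_boot all_order all_algebra perm.
From mathcomp Require Import all_classical all_reals all_analysis.
From mathcomp Require Import measurable_realfun.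
Set Implicit Arguments. Unset Strict Implicit. Unset Printing Implicit Defensive.
Import Order.TTheory GRing.Theory Num.Theory.
Local Open Scope classical_set_scope.
Local Open Scope ring_scope.

(* When X has full column rank, the Penrose equations force X^+ X = 1, so
   w^T x_0 = (X w)^T ((X^+)^T x_0) = sum_j (w^T x_j) (x~_j^T x_0), and summing
   over the graph of pi merely reindexes this sum.  Full rank holds almost surely
   because the top d x d block of X has an almost surely nonzero determinant:
   expanding along its last row, det = c z + r, where z is one Gaussian entry
   and c (a signed minor) and r only depend on the other entries.  By
   independence the law of ((c, r), z) is a product measure, and z has no
   atoms, so {c <> 0, c z + r = 0} is null; {c = 0} is null by induction. *)

Lemma mulmx_trmx_self_eq0 (R : realDomainType) n (u : 'rV[R]_n) :
  u *m u^T = 0 -> u = 0.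
Proof.
move=> /matrixP /(_ 0 0); rewrite !mxE => sq0.
have sq_ge0 i : true -> 0 <= u 0 i * u^T i 0 by rewrite mxE -expr2 sqr_ge0.
apply/rowP => i; have /eqP := @psumr_eq0P _ _ xpredT _ sq_ge0 sq0 i isT.
by rewrite !mxE mulf_eq0 orbb => /eqP.
Qed.

Lemma gram_unitmx (R : realFieldType) n d (X : 'M[R]_(n, d)) :
  row_full X -> X^T *m X \in unitmx.
Proof.
move=> fullX; rewrite -row_free_unit; apply: inj_row_free => v vXX0.
have vXt0 : v *m X^T = 0.
  apply: mulmx_trmx_self_eq0.
  by rewrite trmx_mul trmxK mulmxA -(mulmxA v) vXX0 mul0mx.
have freeXt : row_free X^T by rewrite /row_free mxrank_tr.
by apply/eqP; rewrite -(mulmx_free_eq0 _ freeXt) vXt0.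
Qed.

Lemma penrose_full_col (R : realType) n d (X : 'M[R]_(n, d)) :
  row_full X -> penrose X (invmx (X^T *m X) *m X^T).
Proof.
move=> /gram_unitmx G; split.
- by rewrite !mulmxA -(mulmxA _ _ X) -(mulmxA X) mulVmx // mulmx1.
- by rewrite -!mulmxA (mulmxA X^T) mulmxA mulVmx // mul1mx.
- by rewrite !trmx_mul trmxK trmx_inv trmx_mul trmxK mulmxA.
- by rewrite -mulmxA mulVmx // trmx1.
Qed.

Lemma mulVmp_pinv (R : realType) n d (X : 'M[R]_(n, d)) :
  row_full X -> mp_pinv X *m X = 1%:M.
Proof.
move=> fullX; have [XYX _ _ _] : penrose X (mp_pinv X).
  by apply: xgetPex; exists (invmx (X^T *m X) *m X^T); exact: penrose_full_col.
by apply: (row_full_inj fullX); rewrite mulmxA XYX mulmx1.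
Qed.

Lemma row_full_rowsub_unit (F : fieldType) m n (f : 'I_n -> 'I_m)
    (X : 'M[F]_(m, n)) :
  rowsub f X \in unitmx -> row_full X.
Proof.
by move=> U; rewrite -col_leq_rank -{1}(mxrank_unit U) mxrankS ?rowsub_sub.
Qed.

Lemma sum_perm_graph (V : nmodType) (I : finType) (s : {perm I})
    (F : I * I -> V) :
  \sum_(p : I * I | s p.1 == p.2) F p = \sum_i F (i, s i).
Proof.
rewrite (eq_bigl (fun p => xpredT p.1 && (s p.1 == p.2))) //.
rewrite (eq_bigr (fun p => F (p.1, p.2))) => [|[] //].
rewrite -(pair_big_dep xpredT (fun i j => s i == j) (fun i j => F (i, j))).
by apply: eq_bigr => i _; apply: big_pred1 => j; rewrite /= eq_sym.
Qed.

Lemma dot_eq_sum_left_inv (R : comNzRingType) n d (X : 'M[R]_(n, d))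
    (Y : 'M[R]_(d, n)) (u v : 'cV[R]_d) :
  Y *m X = 1%:M ->
  (u^T *m v) 0 0 = \sum_j (u^T *m (row j X)^T) 0 0 * ((col j Y)^T *m v) 0 0.
Proof.
move=> YX; have -> : u^T *m v = u^T *m X^T *m (Y^T *m v).
  by rewrite mulmxA -(mulmxA _ X^T) -trmx_mul YX trmx1 mulmx1.
rewrite [LHS]mxE; apply: eq_bigr => j _.
by congr (_ * _); rewrite !mxE; apply: eq_bigr => a _; rewrite !mxE.
Qed.

Lemma dot_eq_sum_perm_graph (R : comNzRingType) n d (X : 'M[R]_(n, d))
    (Y : 'M[R]_(d, n)) (u v : 'cV[R]_d) (s : {perm 'I_n}) :
  Y *m X = 1%:M ->
  (u^T *m v) 0 0 = \sum_(p : 'I_n * 'I_n | s p.1 == p.2)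
     (u^T *m (row (s p.1) X)^T) 0 0 * ((col p.2 Y)^T *m v) 0 0.
Proof.
move=> YX; rewrite sum_perm_graph (dot_eq_sum_left_inv _ _ YX).
exact: (reindex_inj (@perm_inj _ s)).
Qed.

Lemma measurable_det d (T : measurableType d) (R : realType) m
    (A : T -> 'M[R]_m) :
  (forall i j, measurable_fun setT (fun w => A w i j)) ->
  measurable_fun setT (fun w => \det (A w)).
Proof.
move=> mA; rewrite /determinant; apply: measurable_sum => s.
apply: measurable_funM; first exact: measurable_cst.
by apply: measurable_prod => i _; exact: mA.
Qed.

Lemma measurable_cofactor d (T : measurableType d) (R : realType) m
    (A : T -> 'M[R]_m) i j :
  (forall a b, a != i -> b != j -> measurable_fun setT (fun w => A w a b)) ->
  measurable_fun setT (fun w => cofactor (A w) i j).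
Proof.
move=> mA; rewrite /cofactor; apply: measurable_funM; first exact: measurable_cst.
apply: measurable_det => a b; under eq_fun do rewrite !mxE.
by apply: mA; rewrite eq_sym neq_lift.
Qed.

Lemma std_normal_atomless d (T : measurableType d) (R : realType)
    (P : probability T R) (X : {RV P >-> R}) :
  std_normal X -> forall x, P (X @^-1` [set x]) = 0%E.
Proof.
move=> hX x; rewrite -[LHS]/(distribution P X _) hX //.
exact: (integral_Sset1 x).
Qed.

Definition affine_root_set (R : realType) : set ((R * R) * R) :=
  [set p | p.1.1 != 0 /\ p.1.1 * p.2 + p.1.2 = 0].
Arguments affine_root_set : clear implicits.

Lemma measurable_affine_root_set (R : realType) :
  measurable (affine_root_set R).
Proof.
have mc : measurable_fun setT (fun p : (R * R) * R => p.1.1).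
  exact: measurableT_comp measurable_fst measurable_fst.
have maff : measurable_fun setT (fun p : (R * R) * R => p.1.1 * p.2 + p.1.2).
  apply: measurable_funD; first exact: measurable_funM mc measurable_snd.
  exact: measurableT_comp measurable_snd measurable_fst.
have -> : affine_root_set R =
    (setT `&` (fun p => p.1.1) @^-1` ~` [set 0]) `&`
    (setT `&` (fun p => p.1.1 * p.2 + p.1.2) @^-1` [set 0]).
  apply/seteqP; split=> p /=.
    by move=> [c0 e]; split; split=> //; exact/eqP.
  by move=> [[_ /eqP c0] [_ e]].
by apply: measurableI; [apply: mc | apply: maff] => //; apply/measurableC.
Qed.

Lemma xsection_affine_root_set (R : realType) (t : R * R) :
  xsection (affine_root_set R) t `<=` [set - t.2 / t.1].
Proof.
move=> z; rewrite /xsection /= inE => -[c0 /eqP]; rewrite addr_eq0 => /eqP <-.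
by rewrite /= [t.1 * z]mulrC mulfK.
Qed.

Section OtherCoordinates.
Variables (d : measure_display) (T : measurableType d) (R : realType)
  (P : probability T R) (I : finType) (Z : I -> {RV P >-> R}).
Hypothesis indepZ : mutually_independent Z.
Variable k : I.

(* A pi-system generating the sigma-algebra of the coordinates other than [k]. *)
Definition cylinders_off : set (set T) :=
  [set A | exists2 B : I -> set R, (forall i, measurable (B i)) /\ B k = setT &
     A = \bigcap_(i in [set: I]) (Z i @^-1` B i)].

Local Notation Tk := (g_sigma_algebraType cylinders_off).

Lemma cylinders_off_measurable : cylinders_off `<=` measurable.
Proof.
move=> _ [B [mB _] ->]; apply: fin_bigcap_measurable; first exact: finite_finset.
by move=> i _; exact: measurable_funPTI.
Qed.

Lemma cylinders_off_setI_closed : setI_closed cylinders_off.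
Proof.
move=> _ _ [B [mB Bk] ->] [B' [mB' B'k] ->].
exists (fun i => B i `&` B' i).
  by split=> [i|]; [exact: measurableI | rewrite Bk B'k setIT].
apply/seteqP; split=> w /=.
  by move=> [H H'] i _; split; [exact: H | exact: H'].
by move=> H; split=> i _; have [] := H i Logic.I.
Qed.

Lemma cylinders_off_indep A C : cylinders_off A -> measurable C ->
  P (A `&` Z k @^-1` C) = (P A * P (Z k @^-1` C))%E.
Proof.
move=> [B [mB Bk] ->] mC; pose B' i := if i == k then C else B i.
have -> : \bigcap_(i in [set: I]) (Z i @^-1` B i) `&` Z k @^-1` C =
          \bigcap_(i in [set: I]) (Z i @^-1` B' i).
  apply/seteqP; split=> w /=.
    by move=> [H Hk] i _; rewrite /B'; case: eqP => [->|_] //; exact: H.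
  move=> H; split; last by have := H k Logic.I; rewrite /B' eqxx.
  move=> i _; have := H i Logic.I.
  by rewrite /B'; case: eqP => [->|] //; rewrite Bk.
rewrite indepZ; last by move=> i; rewrite /B'; case: eqP.
rewrite indepZ // (bigD1 k) //= [in RHS](bigD1 k) //= Bk preimage_setT.
rewrite probability_setT mul1e /B' eqxx muleC; congr (_ * _)%E.
by apply: eq_bigr => i /negPf ->.
Qed.

Lemma g_sigma_cylinders_off_measurable : <<s cylinders_off >> `<=` measurable.
Proof.
exact: smallest_sub (@sigma_algebra_measurable _ T) cylinders_off_measurable.
Qed.

(* Both sides are finite measures in A that agree on the cylinders. *)
Lemma g_sigma_cylinders_off_indep A C : <<s cylinders_off >> A -> measurable C ->
  P (A `&` Z k @^-1` C) = (P A * P (Z k @^-1` C))%E.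
Proof.
move=> sA mC; have mZC : measurable (Z k @^-1` C) := measurable_funPTI _ mC.
pose r := NngNum (fine_ge0 (measure_ge0 P (Z k @^-1` C))).
have rE : (r%:num%:E = P (Z k @^-1` C))%E by rewrite /= fineK ?fin_num_measure.
suff : mrestr P mZC A = mscale r P A by rewrite /= /mrestr /mscale rE muleC.
apply: (@g_sigma_algebra_measure_unique _ R T _ cylinders_off_measurable
  (fun=> setT) _ _ (mrestr P mZC) (mscale r P) cylinders_off_setI_closed) => //.
- move=> _; exists (fun=> setT); first by [].
  by apply/seteqP; split=> w // _ i _.
- by apply/seteqP; split=> w // _; exists 0%N.
- move=> B cB; rewrite /= /mrestr /mscale rE muleC.
  exact: cylinders_off_indep.
- move=> _; rewrite /= /mrestr setTI.
  exact: le_lt_trans (probability_le1 _ _) (ltry _).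
Qed.

Lemma measurable_coord_off j : j != k -> measurable_fun (T := Tk) setT (Z j).
Proof.
move=> jk _ B mB; rewrite setTI; apply: sub_gen_smallest.
exists (fun i => if i == j then B else setT).
  by split=> [i|]; [case: eqP | rewrite eq_sym (negPf jk)].
apply/seteqP; split=> w /=; first by move=> Bw i _; case: eqP => // ->.
by move=> H; have := H j Logic.I; rewrite eqxx.
Qed.

Section MeasurableOff.
Variables (d2 : measure_display) (T2 : measurableType d2) (W : T -> T2).
Hypothesis mW : measurable_fun (T := Tk) setT W.

Let mWT : measurable_fun setT W.
Proof.
by move=> _ B mB; have /g_sigma_cylinders_off_measurable := mW measurableT mB.
Qed.

HB.instance Definition _ := isMeasurableFun.Build _ _ T T2 W mWT.

Definition pair_off (w : T) : T2 * R := (W w, Z k w).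

Lemma measurable_pair_off : measurable_fun setT pair_off.
Proof. exact: measurable_fun_pair mWT (measurable_funPT (Z k)). Qed.

HB.instance Definition _ :=
  isMeasurableFun.Build _ _ T _ pair_off measurable_pair_off.

(* The law of [pair_off] is the product of the laws of [W] and [Z k], so by
   Tonelli the measure of [S] integrates the measures of its sections. *)
Lemma null_sections_null S : measurable S ->
  (forall t, distribution P (Z k) (xsection S t) = 0)%E ->
  P (pair_off @^-1` S) = 0%E.
Proof.
move=> mS S0; have rect A B : measurable A -> measurable B ->
    distribution P pair_off (A `*` B) =
    (distribution P W A * distribution P (Z k) B)%E.
  move=> mA mB; rewrite /distribution /pushforward.
  have -> : pair_off @^-1` (A `*` B) = W @^-1` A `&` Z k @^-1` B.
    by apply/seteqP; split=> w [].
  apply: g_sigma_cylinders_off_indep mB.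
  by have := mW measurableT mA; rewrite setTI.
rewrite -[LHS]/(distribution P pair_off S) -(product_measure_unique rect mS).
by apply: integral0_eq => t _; exact: S0.
Qed.

End MeasurableOff.

Lemma affine_root_off_negligible (c r : T -> R) :
  (forall x, P (Z k @^-1` [set x]) = 0%E) ->
  measurable_fun (T := Tk) setT c -> measurable_fun (T := Tk) setT r ->
  P.-negligible [set w | c w != 0 /\ c w * Z k w + r w = 0].
Proof.
move=> atomless mc mr; pose W w := (c w, r w).
have mW : measurable_fun (T := Tk) setT W by exact: measurable_fun_pair.
have mS := @measurable_affine_root_set R.
exists (pair_off W @^-1` affine_root_set R); split => //.
- by rewrite -[X in measurable X]setTI; apply: (measurable_pair_off mW).
- apply: null_sections_null => // t.
  apply/eqP; rewrite eq_le measure_ge0 andbT -(atomless (- t.2 / t.1)).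
  apply: le_measure; rewrite ?inE; last exact: xsection_affine_root_set.
    exact: measurable_xsection.
  exact: measurable_set1.
Qed.

End OtherCoordinates.

Section RandomDeterminant.
Variables (d : measure_display) (T : measurableType d) (R : realType)
  (P : probability T R) (I : finType) (Z : I -> {RV P >-> R}).
Hypothesis indepZ : mutually_independent Z.
Hypothesis Z_atomless : forall i x, P (Z i @^-1` [set x]) = 0%E.

Definition rv_matrix m (f : 'I_m * 'I_m -> I) (w : T) : 'M[R]_m :=
  \matrix_(i, j) Z (f (i, j)) w.

Lemma measurable_rv_matrix_off m (f : 'I_m * 'I_m -> I) k a b :
  injective f -> (a, b) != k ->
  measurable_fun (T := g_sigma_algebraType (cylinders_off Z (f k))) setT
    (fun w => rv_matrix f w a b).
Proof.
move=> f_inj abk; under eq_fun do rewrite mxE.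
by apply: measurable_coord_off; apply: contra abk => /eqP/f_inj->.
Qed.

Lemma measurable_cofactor_off m (f : 'I_m.+1 * 'I_m.+1 -> I) j : injective f ->
  measurable_fun
    (T := g_sigma_algebraType (cylinders_off Z (f (ord_max, ord_max)))) setT
    (fun w => cofactor (rv_matrix f w) ord_max j).
Proof.
move=> f_inj; apply: measurable_cofactor => a b a_max _.
by apply: measurable_rv_matrix_off; rewrite // xpair_eqE negb_and a_max.
Qed.

Lemma negligible_rv_matrix_det_eq0 m (f : 'I_m * 'I_m -> I) : injective f ->
  P.-negligible [set w | \det (rv_matrix f w) = 0].
Proof.
elim: m f => [|m IHm] f f_inj.
  apply: (negligibleS _ (negligible_set0 _)) => w /=.
  by rewrite det_mx00 => /eqP; rewrite oner_eq0.
pose f' (p : 'I_m * 'I_m) := f (lift ord_max p.1, lift ord_max p.2).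
have f'_inj : injective f'.
  move=> [a b] [a' b'] /f_inj/eqP; rewrite /= xpair_eqE.
  by move=> /andP[/eqP/lift_inj-> /eqP/lift_inj->].
pose c w := cofactor (rv_matrix f w) ord_max ord_max.
pose r w := \sum_(j < m) rv_matrix f w ord_max (widen_ord (leqnSn m) j) *
  cofactor (rv_matrix f w) ord_max (widen_ord (leqnSn m) j).
have mr : measurable_fun
    (T := g_sigma_algebraType (cylinders_off Z (f (ord_max, ord_max)))) setT r.
  apply: measurable_sum => j; apply: measurable_funM.
    apply: measurable_rv_matrix_off => //.
    by rewrite xpair_eqE eqxx -val_eqE /= ltn_eqF.
  by apply: measurable_cofactor_off.
have mc := measurable_cofactor_off ord_max f_inj.
apply: (negligibleS _ (negligibleU (IHm f' f'_inj)
  (affine_root_off_negligible indepZ (c := c) (Z_atomless _) mc mr))).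
move=> w /= det0.
have cE : c w = (-1) ^+ (m + m) * \det (rv_matrix f' w).
  by rewrite /c /cofactor; congr (_ * \det _); apply/matrixP => a b; rewrite !mxE.
have detE : \det (rv_matrix f w) = c w * Z (f (ord_max, ord_max)) w + r w.
  by rewrite (expand_det_row _ ord_max) big_ord_recr /= mxE addrC mulrC.
have [minor0|minor_neq0] := eqVneq (\det (rv_matrix f' w)) 0; first by left.
by right; split; [rewrite cE mulf_neq0 ?signr_eq0 | rewrite -detE].
Qed.

End RandomDeterminant.

Theorem mainTheorem2 (R : realType) (n d : nat) (hd1 : (1 <= d)%N) (hdn : (d <= n)%N)
    (wbar : 'cV[R]_d) (pibar : {perm 'I_n})
    (dT : measure_display) (T : measurableType dT) (P : probability T R)
    (Z : 'I_n.+1 * 'I_d -> {RV P >-> R})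
    (hind : mutually_independent Z)
    (hnorm : forall k, std_normal (Z k)) :
  let x (k : 'I_n.+1) (w : T) : 'cV[R]_d := \col_l Z (k, l) w in
  let x0 w := x ord0 w in
  let xs (i : 'I_n) w := x (lift ord0 i) w in
  let y0 w := (wbar^T *m x0 w) 0 0 in
  let y (i : 'I_n) w := (wbar^T *m xs (pibar i) w) 0 0 in
  let X w : 'M[R]_(n, d) := \matrix_(i < n, l < d) xs i w l 0 in
  let xt (j : 'I_n) w : 'cV[R]_d := col j (mp_pinv (X w)) in
  let c (i j : 'I_n) w := y i w * ((xt j w)^T *m x0 w) 0 0 in
  {ae P, forall w, \rank (X w) = d /\
     y0 w = \sum_(p : 'I_n * 'I_n | pibar p.1 == p.2) c p.1 p.2 w}.
Proof.
move=> x x0 xs y0 y X xt c.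
pose f (p : 'I_d * 'I_d) := (lift ord0 (widen_ord hdn p.1), p.2).
have f_inj : injective f.
  move=> [a b] [a' b'] /eqP; rewrite xpair_eqE.
  by move=> /andP[/eqP/lift_inj/(congr1 val) /= /val_inj-> /eqP->].
have atomless k := std_normal_atomless (hnorm k).
apply: (negligibleS _ (negligible_rv_matrix_det_eq0 hind atomless f_inj)).
move=> w /= not_ok.
have [//|det_neq0] := eqVneq (\det (rv_matrix Z f w)) 0; case: not_ok.
have fullX : row_full (X w).
  apply: (@row_full_rowsub_unit _ _ _ (widen_ord hdn)).
  suff -> : rowsub (widen_ord hdn) (X w) = rv_matrix Z f w.
    by rewrite unitmxE unitfE.
  by apply/matrixP => a b; rewrite !mxE.
have xsE j : xs j w = (row j (X w))^T by apply/matrixP => a b; rewrite !mxE.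
split; first exact/eqP.
rewrite /y0 (dot_eq_sum_perm_graph _ _ pibar (mulVmp_pinv fullX)).
by apply: eq_bigr => p _; rewrite /c /y /xt xsE.
Qed.
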